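(* Let $(\mathcal M_i,\phi_{ij})$ be an inverse system of local Moufang sets over a directed set $(I,\succcurlyeq)$, with $\mathcal M_i$ acting on $(X_i,\sim)$, such that every $\phi_{ij}$ is surjective, and assume $I$ has a cofinal sequence. Let $L:=\{(x_i)\in\prod_iX_i\mid x_i\phi_{ij}=x_j\ \forall i\succcurlyeq j\}$. Then every projection $p_j:L\to X_j$, $(x_i)\mapsto x_j$, is surjective; $L$ has more than two classes for the relation $(x_i)\sim(y_i)\iff x_i\sim y_i$ for some (equivalently all) $i$; and hence the inverse limit of $(\mathcal M_i,\phi_{ij})$ exists in the category of local Moufang sets.
   Context: Group actions are right actions; maps composed left to right. For $(X,\sim)$, $\overline x$ is the class of $x$, $\overline X$ the set of classes, $\mathrm{Sym}(X,\sim)$ the bijections $g$ with $x\sim y\iff xg\sim yg$, $\overline U$ the induced group on $\overline X$. A local Moufang set is $(X,\sim)$ with $|\overline X|>2$ and subgroups $U_x\le\mathrm{Sym}(X,\sim)$ ($x\in X$) with: (LM0) $x\sim y\Rightarrow\overline{U_x}=\overline{U_y}$; (LM1) $U_x$ fixes $x$ and is sharply transitive on $X\setminus\overline x$; (LM1') $\overline{U_x}$ fixes $\overline x$ and is sharply transitive on $\overline X\setminus\{\overline x\}$; (LM2) $U_x^g=U_{xg}$ for all $x$ and all $g\in\langle U_y\rangle$, where $g^h=h^{-1}gh$. A homomorphism $(X,(U_x))\to(Y,(V_y))$ is a map $\phi:X\to Y$ with $x\sim x'\iff x\phi\sim x'\phi$ and $U_x\phi\subseteq\phi V_{x\phi}$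 for all $x$ (i.e. each $u\in U_x$ has $v\in V_{x\phi}$ with $u\phi=\phi v$); the category of local Moufang sets has these as objects/morphisms, and an inverse limit is a limit in this category of the functor given by the system. A directed set is a nonempty poset in which any two elements have a common upper bound; it has a cofinal sequence if there are $i_1\preccurlyeq i_2\preccurlyeq\cdots$ in $I$ such that every $i\in I$ satisfies $i\preccurlyeq i_\ell$ for some $\ell$. An inverse system over $I$: local Moufang sets $\mathcal M_i$ and homomorphisms $\phi_{ij}:\mathcal M_i\to\mathcal M_j$ ($i\succcurlyeq j$) with $\phi_{ii}=\mathrm{id}$, $\phi_{jk}\circ\phi_{ij}=\phi_{ik}$. *)

From Stdlib Require Import Classical FunctionalExtensionality.

Set Implicit Arguments.

(* Conventions: permutations are functions X -> X; the right action x g is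
   written (g x).  Products are composed left to right: g h := fun z => h (g z). *)

Definition equivalence {X : Type} (sim : X -> X -> Prop) : Prop :=
  (forall x, sim x x) /\ (forall x y, sim x y -> sim y x) /\
  (forall x y z, sim x y -> sim y z -> sim x z).

Definition more_than_two_classes {X : Type} (sim : X -> X -> Prop) : Prop :=
  exists a b c : X, ~ sim a b /\ ~ sim a c /\ ~ sim b c.

Definition preserves_sim {X : Type} (sim : X -> X -> Prop) (g : X -> X) : Prop :=
  forall x y, sim x y <-> sim (g x) (g y).

(* G is a subgroup of Sym(X,~) (bijectivity follows from having an inverse in G) *)
Definition subgroup_Sym {X : Type} (sim : X -> X -> Prop) (G : (X -> X) -> Prop) : Prop :=
  G (fun z => z) /\
  (forall g h, G g -> G h -> G (fun z => h (g z))) /\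
  (forall g, G g -> exists h, G h /\ (forall z, h (g z) = z /\ g (h z) = z)) /\
  (forall g, G g -> preserves_sim sim g).

(* The group < U_y | y in X > generated by all root groups: finite products of
   elements of the U_y (each U_y being a group, this is closed under inverses). *)
Inductive gen_group {X : Type} (U : X -> (X -> X) -> Prop) : (X -> X) -> Prop :=
| gen_id : gen_group U (fun z => z)
| gen_mul : forall y u g, U y u -> gen_group U g -> gen_group U (fun z => g (u z)).

Definition is_LMS {X : Type} (sim : X -> X -> Prop) (U : X -> (X -> X) -> Prop) : Prop :=
  equivalence sim /\
  more_than_two_classes sim /\
  (forall x, subgroup_Sym sim (U x)) /\
  (* LM0: x ~ y -> induced groups on X/~ coincide *)
  (forall x y, sim x y ->
     (forall u, U x u -> exists v, U y v /\ forall z, sim (u z) (v z)) /\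
     (forall v, U y v -> exists u, U x u /\ forall z, sim (u z) (v z))) /\
  (forall x u, U x u -> u x = x) /\
  (forall x y z, ~ sim x y -> ~ sim x z ->
     exists u, U x u /\ u y = z /\
       forall u', U x u' -> u' y = z -> forall w, u' w = u w) /\
  (forall x u, U x u -> sim (u x) x) /\
  (forall x y z, ~ sim x y -> ~ sim x z ->
     exists u, U x u /\ sim (u y) z /\
       forall u', U x u' -> sim (u' y) z -> forall w, sim (u' w) (u w)) /\
  (* LM2: U_x^g = U_{xg} for g in <U_y>, with U_x^g = g^-1 U_x g *)
  (forall x g ginv, gen_group U g ->
     (forall z, ginv (g z) = z /\ g (ginv z) = z) ->
     forall u, U (g x) u <-> exists v, U x v /\ forall z, u z = g (v (ginv z))).

Definition is_LMS_hom {X Y : Type} (simX : X -> X -> Prop) (U : X -> (X -> X) -> Prop)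
  (simY : Y -> Y -> Prop) (V : Y -> (Y -> Y) -> Prop) (f : X -> Y) : Prop :=
  (forall x x', simX x x' <-> simY (f x) (f x')) /\
  (forall x u, U x u -> exists v, V (f x) v /\ forall z, f (u z) = v (f z)).

Definition directed_set {I : Type} (le : I -> I -> Prop) : Prop :=
  (exists i : I, True) /\
  (forall i, le i i) /\
  (forall i j, le i j -> le j i -> i = j) /\
  (forall i j k, le i j -> le j k -> le i k) /\
  (forall i j, exists k, le i k /\ le j k).

Definition has_cofinal_sequence {I : Type} (le : I -> I -> Prop) : Prop :=
  exists s : nat -> I, (forall n, le (s n) (s (S n))) /\ (forall i, exists n, le i (s n)).

Definition inverse_system {I : Type} (le : I -> I -> Prop) (X : I -> Type)
  (sim : forall i, X i -> X i -> Prop) (U : forall i, X i -> (X i -> X i) -> Prop)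
  (phi : forall i j, le j i -> X i -> X j) : Prop :=
  (forall i, is_LMS (sim i) (U i)) /\
  (forall i j (H : le j i), is_LMS_hom (sim i) (U i) (sim j) (U j) (phi i j H)) /\
  (forall i (H : le i i) x, phi i i H x = x) /\
  (forall i j k (Hij : le j i) (Hjk : le k j) (Hik : le k i) x,
     phi j k Hjk (phi i j Hij x) = phi i k Hik x).

Definition is_cone {I : Type} (le : I -> I -> Prop) (X : I -> Type)
  (sim : forall i, X i -> X i -> Prop) (U : forall i, X i -> (X i -> X i) -> Prop)
  (phi : forall i j, le j i -> X i -> X j)
  {Z : Type} (simZ : Z -> Z -> Prop) (W : Z -> (Z -> Z) -> Prop)
  (psi : forall i, Z -> X i) : Prop :=
  is_LMS simZ W /\
  (forall i, is_LMS_hom simZ W (sim i) (U i) (psi i)) /\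
  (forall i j (H : le j i) z, phi i j H (psi i z) = psi j z).

Definition inverse_limit_exists {I : Type} (le : I -> I -> Prop) (X : I -> Type)
  (sim : forall i, X i -> X i -> Prop) (U : forall i, X i -> (X i -> X i) -> Prop)
  (phi : forall i j, le j i -> X i -> X j) : Prop :=
  exists (Y : Type) (simY : Y -> Y -> Prop) (V : Y -> (Y -> Y) -> Prop)
         (pi : forall i, Y -> X i),
    is_cone le X sim U phi simY V pi /\
    forall (Z : Type) (simZ : Z -> Z -> Prop) (W : Z -> (Z -> Z) -> Prop)
           (psi : forall i, Z -> X i),
      is_cone le X sim U phi simZ W psi ->
      exists theta : Z -> Y,
        is_LMS_hom simZ W simY V theta /\
        (forall i z, pi i (theta z) = psi i z) /\
        (forall theta' : Z -> Y, is_LMS_hom simZ W simY V theta' ->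
           (forall i z, pi i (theta' z) = psi i z) -> forall z, theta' z = theta z).

From Stdlib Require Import Classical FunctionalExtensionality ClassicalEpsilon
  ChoiceFacts ProofIrrelevance PeanoNat.

Set Implicit Arguments.

(* The limit is the set of compatible threads, with x ~ y levelwise and with
   root groups given by compatible families of root elements.  Directedness makes
   "x ~ y at one level" equivalent to "x ~ y at every level", so each axiom of a
   local Moufang set passes to the limit once one knows that the root elements
   sending b to c (or the class of b to that of c) at each level form a compatible
   family; this follows from sharp transitivity, because each phi_ij carries root
   elements to root elements.  The cofinal sequence lets one lift a point of X_j
   to a whole thread by successive lifts along the sequence; this gives surjective
   projections, hence three pairwise inequivalent threads. *)

Lemma dependent_choice {A : Type} {B : A -> Type} (R : forall x, B x -> Prop) :
  (forall x, exists y, R x y) -> exists f : forall x, B x, forall x, R x (f x).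
Proof. exact (non_dep_dep_functional_choice choice B R). Qed.

Lemma exists_not_sim {T : Type} (sim : T -> T -> Prop) :
  equivalence sim -> more_than_two_classes sim -> forall x, exists z, ~ sim x z.
Proof.
  intros (_ & hsym & htrans) (a & b & _ & hab & _ & _) x.
  destruct (classic (sim x a)) as [hxa|hxa]; [|eauto].
  exists b. intro hxb. apply hab. eauto.
Qed.

Section LocalMoufangSet.
Context {T : Type} {sim : T -> T -> Prop} {U : T -> (T -> T) -> Prop}.
Hypothesis hL : is_LMS sim U.

Lemma lms_refl x : sim x x.
Proof. destruct hL as ((hrefl & _ & _) & _). apply hrefl. Qed.

Lemma lms_sym {x y} : sim x y -> sim y x.
Proof. destruct hL as ((_ & hsym & _) & _). apply hsym. Qed.

Lemma lms_trans {x y z} : sim x y -> sim y z -> sim x z.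
Proof. destruct hL as ((_ & _ & htrans) & _). apply htrans. Qed.

Lemma lms_more_classes : more_than_two_classes sim.
Proof. apply hL. Qed.

Lemma lms_exists_not_sim x : exists z, ~ sim x z.
Proof. apply exists_not_sim; apply hL. Qed.

Lemma root_id x : U x (fun z => z).
Proof. apply hL. Qed.

Lemma root_comp {x g h} : U x g -> U x h -> U x (fun z => h (g z)).
Proof. apply hL. Qed.

Lemma root_inv {x g} : U x g -> exists h, U x h /\ forall z, h (g z) = z /\ g (h z) = z.
Proof. apply hL. Qed.

Lemma root_preserves_sim {x g} : U x g -> forall a b, sim a b <-> sim (g a) (g b).
Proof. apply hL. Qed.

Lemma lms_LM0 {x y} : sim x y -> forall u, U x u -> exists v, U y v /\ forall z, sim (u z) (v z).
Proof. intros hxy. apply (proj1 (proj1 (proj2 (proj2 (proj2 hL))) x y hxy)). Qed.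

Lemma root_fixes {x u} : U x u -> u x = x.
Proof. apply hL. Qed.

Lemma root_exists {x y z} : ~ sim x y -> ~ sim x z -> exists u, U x u /\ u y = z.
Proof.
  intros hy hz. destruct hL as (_ & _ & _ & _ & _ & hLM1 & _).
  destruct (hLM1 x y z hy hz) as (u & hu & huy & _). eauto.
Qed.

Lemma root_image_not_sim {x u y} : U x u -> ~ sim x y -> ~ sim x (u y).
Proof.
  intros hu hy hxy. apply hy.
  apply (root_preserves_sim hu). rewrite (root_fixes hu). exact hxy.
Qed.

Lemma root_unique {x y u u'} : ~ sim x y -> U x u -> U x u' -> u y = u' y ->
  forall w, u w = u' w.
Proof.
  intros hy hu hu' e w. destruct hL as (_ & _ & _ & _ & _ & hLM1 & _).
  destruct (hLM1 x y (u y) hy (root_image_not_sim hu hy)) as (u0 & _ & _ & huniq).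
  rewrite (huniq u hu eq_refl w), (huniq u' hu' (eq_sym e) w). reflexivity.
Qed.

Lemma root_unique_classes {x y u u'} : ~ sim x y -> U x u -> U x u' ->
  sim (u y) (u' y) -> forall w, sim (u w) (u' w).
Proof.
  intros hy hu hu' e w. destruct hL as (_ & _ & _ & _ & _ & _ & _ & hLM1' & _).
  destruct (hLM1' x y (u y) hy (root_image_not_sim hu hy)) as (u0 & _ & _ & huniq).
  apply (@lms_trans _ (u0 w)); [apply huniq; auto using lms_refl|].
  apply lms_sym, huniq; auto using lms_sym.
Qed.

Lemma root_conj {x g ginv} : gen_group U g -> (forall z, ginv (g z) = z /\ g (ginv z) = z) ->
  forall u, U (g x) u <-> exists v, U x v /\ forall z, u z = g (v (ginv z)).
Proof. apply hL. Qed.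

Lemma gen_group_invertible g : gen_group U g -> exists h, forall z, h (g z) = z /\ g (h z) = z.
Proof.
  induction 1 as [|y u g hu _ [h hh]].
  - exists (fun z => z). auto.
  - destruct (root_inv hu) as (ui & _ & hui).
    exists (fun z => ui (h z)). intro z. split.
    + rewrite (proj1 (hh (u z))). apply hui.
    + rewrite (proj2 (hui (h z))). apply hh.
Qed.

End LocalMoufangSet.

Definition compatible {I : Type} {le : I -> I -> Prop} {X : I -> Type}
  (phi : forall i j, le j i -> X i -> X j) (x : forall i, X i) : Prop :=
  forall i j (H : le j i), phi i j H (x i) = x j.

Definition compatible_maps {I : Type} {le : I -> I -> Prop} {X : I -> Type}
  (phi : forall i j, le j i -> X i -> X j) (u : forall i, X i -> X i) : Prop :=
  forall i j (H : le j i) w, phi i j H (u i w) = u j (phi i j H w).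

Section CompatibleFamilies.
Context {I : Type} {le : I -> I -> Prop} {X : I -> Type} {phi : forall i j, le j i -> X i -> X j}.
Arguments phi : clear implicits.

Lemma compatible_maps_apply {u x} : compatible_maps phi u -> compatible phi x ->
  compatible phi (fun i => u i (x i)).
Proof. intros hu hx i j H. rewrite hu, hx. reflexivity. Qed.

Lemma compatible_maps_comp {u v} : compatible_maps phi u -> compatible_maps phi v ->
  compatible_maps phi (fun i z => v i (u i z)).
Proof. intros hu hv i j H w. rewrite hv, hu. reflexivity. Qed.

Lemma compatible_maps_inverse {u h} : compatible_maps phi u ->
  (forall i z, h i (u i z) = z /\ u i (h i z) = z) -> compatible_maps phi h.
Proof.
  intros hu hinv i j H w.
  rewrite <- (proj1 (hinv j (phi i j H (h i w)))), <- hu.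
  f_equal. f_equal. apply hinv.
Qed.

Hypothesis hrefl : forall i, le i i.
Hypothesis htrans : forall i j k, le i j -> le j k -> le i k.
Hypothesis hid : forall i (H : le i i) x, phi i i H x = x.
Hypothesis hcomp : forall i j k (Hij : le j i) (Hjk : le k j) (Hik : le k i) x,
  phi j k Hjk (phi i j Hij x) = phi i k Hik x.

Section Thread.
Variable t : nat -> I.
Hypothesis t_mono : forall n, le (t n) (t (S n)).

Lemma chain_le m k : le (t m) (t (k + m)).
Proof.
  induction k as [|k IH]; [apply hrefl|].
  exact (htrans IH (t_mono (k + m))).
Qed.

Variable w : forall n, X (t n).
Hypothesis w_thread : forall n, phi _ _ (t_mono n) (w (S n)) = w n.

Lemma thread_down m k (H : le (t m) (t (k + m))) : phi _ _ H (w (k + m)) = w m.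
Proof.
  induction k as [|k IH] in H |- *; [apply hid|].
  rewrite <- (IH (chain_le m k)), <- (hcomp (t_mono (k + m)) (chain_le m k) H).
  simpl. rewrite w_thread. reflexivity.
Qed.

Lemma thread_agree i n m (Hn : le i (t n)) (Hm : le i (t m)) :
  phi _ _ Hn (w n) = phi _ _ Hm (w m).
Proof.
  assert (below : forall n m (Hn : le i (t n)) (Hm : le i (t m)), m <= n ->
            phi _ _ Hn (w n) = phi _ _ Hm (w m)).
  { clear n m Hn Hm. intros n m Hn Hm hmn.
    destruct (Nat.le_exists_sub m n hmn) as [k [-> _]].
    rewrite <- (thread_down k (chain_le m k)). symmetry. apply hcomp. }
  destruct (Nat.le_ge_cases m n); [|symmetry]; apply below; assumption.
Qed.

Hypothesis t_cofinal : forall i, exists n, le i (t n).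

Lemma thread_limit : exists x, compatible phi x /\
  forall n i (H : le i (t n)), x i = phi _ _ H (w n).
Proof.
  destruct (choice _ t_cofinal) as [N hN].
  exists (fun i => phi _ _ (hN i) (w (N i))). split.
  - intros i k H. rewrite (hcomp (hN i) H (htrans H (hN i))). apply thread_agree.
  - intros n i H. apply thread_agree.
Qed.

End Thread.

Hypothesis hsurj : forall i j (H : le j i) (y : X j), exists x : X i, phi i j H x = y.
Hypothesis hcof : has_cofinal_sequence le.

Lemma compatible_through j (y : X j) : exists x, compatible phi x /\ x j = y.
Proof.
  destruct hcof as (s & s_mono & s_cofinal).
  destruct (s_cofinal j) as [n0 hj].
  (* Shift the sequence so that it starts above j, where y gets lifted first. *)
  set (t n := s (n + n0)).
  assert (t_mono : forall n, le (t n) (t (S n))) by (intro n; apply s_mono).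
  assert (t_cofinal : forall i, exists n, le i (t n)).
  { intro i. destruct (s_cofinal i) as [n hn]. exists n.
    apply (htrans hn). unfold t. rewrite Nat.add_comm. apply (chain_le _ s_mono). }
  destruct (hsurj (hj : le j (t 0)) y) as [y0 hy0].
  destruct (dependent_choice
              (fun n (f : X (t n) -> X (t (S n))) => forall z, phi _ _ (t_mono n) (f z) = z))
    as [lift hlift].
  { intro n. apply (choice (fun z z' => phi _ _ (t_mono n) z' = z)). intro z. apply hsurj. }
  pose (w := fix w n : X (t n) := match n return X (t n) with 0 => y0 | S m => lift m (w m) end).
  destruct (thread_limit _ t_mono w (fun n => hlift n (w n)) t_cofinal) as (x & hx & hxw).
  exists x. split; [exact hx|]. rewrite (hxw 0 j hj). exact hy0.
Qed.

End CompatibleFamilies.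

Section InverseLimit.
Context {I : Type} {le : I -> I -> Prop} {X : I -> Type}
  {sim : forall i, X i -> X i -> Prop} {U : forall i, X i -> (X i -> X i) -> Prop}
  {phi : forall i j, le j i -> X i -> X j}.
Arguments sim : clear implicits.
Arguments U : clear implicits.
Arguments phi : clear implicits.
Hypothesis hdir : directed_set le.
Hypothesis hsys : inverse_system le X sim U phi.

Lemma index_inhabited : exists i : I, True.
Proof. apply hdir. Qed.

Lemma index_refl i : le i i.
Proof. apply hdir. Qed.

Lemma index_trans i j k : le i j -> le j k -> le i k.
Proof. apply hdir. Qed.

Lemma index_upper_bound i j : exists k, le i k /\ le j k.
Proof. apply hdir. Qed.

Lemma level_LMS i : is_LMS (sim i) (U i).
Proof. apply hsys. Qed.

Lemma phi_id i (H : le i i) x : phi i i H x = x.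
Proof. apply hsys. Qed.

Lemma phi_comp i j k (Hij : le j i) (Hjk : le k j) (Hik : le k i) x :
  phi j k Hjk (phi i j Hij x) = phi i k Hik x.
Proof. apply hsys. Qed.

Lemma phi_sim i j (H : le j i) a b : sim i a b <-> sim j (phi i j H a) (phi i j H b).
Proof. apply hsys. Qed.

Lemma phi_root i j (H : le j i) x u : U i x u ->
  exists v, U j (phi i j H x) v /\ forall z, phi i j H (u z) = v (phi i j H z).
Proof. apply hsys. Qed.

Lemma sim_propagates {x y i k} : compatible phi x -> compatible phi y ->
  sim i (x i) (y i) -> sim k (x k) (y k).
Proof.
  intros hx hy hi. destruct (index_upper_bound i k) as (m & him & hkm).
  rewrite <- (hx m k hkm), <- (hy m k hkm). apply phi_sim.
  apply (phi_sim him). rewrite hx, hy. exact hi.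
Qed.

Lemma root_family {a b c} : compatible phi a -> compatible phi b -> compatible phi c ->
  (forall i, ~ sim i (a i) (b i)) -> (forall i, ~ sim i (a i) (c i)) ->
  exists u, compatible_maps phi u /\ (forall i, U i (a i) (u i)) /\ forall i, u i (b i) = c i.
Proof.
  intros ha hb hc hab hac.
  destruct (dependent_choice (fun i u => U i (a i) u /\ u (b i) = c i)) as [u hu].
  { intro i. exact (root_exists (level_LMS i) (hab i) (hac i)). }
  exists u. repeat split; try apply hu.
  intros i j H w.
  destruct (phi_root H (proj1 (hu i))) as (v & hv & hphi).
  rewrite ha in hv. rewrite hphi.
  apply (root_unique (level_LMS j) (hab j) hv (proj1 (hu j))).
  rewrite (proj2 (hu j)), <- (hb i j H), <- hphi, (proj2 (hu i)). apply hc.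
Qed.

Hypothesis hsurj : forall i j (H : le j i) (y : X j), exists x : X i, phi i j H x = y.
Hypothesis hcof : has_cofinal_sequence le.

Lemma projection_surjective j (y : X j) : exists x, compatible phi x /\ x j = y.
Proof.
  exact (compatible_through index_refl index_trans phi_id phi_comp hsurj hcof j y).
Qed.

Lemma three_separated_families : exists a b c,
  compatible phi a /\ compatible phi b /\ compatible phi c /\
  (forall i, ~ sim i (a i) (b i)) /\ (forall i, ~ sim i (a i) (c i)) /\
  (forall i, ~ sim i (b i) (c i)).
Proof.
  destruct index_inhabited as [j _].
  destruct (lms_more_classes (level_LMS j)) as (a & b & c & hab & hac & hbc).
  destruct (projection_surjective a) as (A & hA & <-).
  destruct (projection_surjective b) as (B & hB & <-).
  destruct (projection_surjective c) as (C & hC & <-).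
  exists A, B, C. repeat split; auto; intros i hi; eauto using sim_propagates.
Qed.

Definition limit_set := {x : forall i, X i | compatible phi x}.

Definition limit_sim (a b : limit_set) : Prop :=
  forall i, sim i (proj1_sig a i) (proj1_sig b i).

Definition limit_root (a : limit_set) (g : limit_set -> limit_set) : Prop :=
  exists u, (forall i, U i (proj1_sig a i) (u i)) /\ compatible_maps phi u /\
    forall b i, proj1_sig (g b) i = u i (proj1_sig b i).

Definition limit_proj (i : I) (a : limit_set) : X i := proj1_sig a i.

Definition limit_map u (hu : compatible_maps phi u) (b : limit_set) : limit_set :=
  exist _ (fun i => u i (proj1_sig b i)) (compatible_maps_apply hu (proj2_sig b)).

Lemma limit_ext (a b : limit_set) : (forall i, proj1_sig a i = proj1_sig b i) -> a = b.
Proof.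
  destruct a as [a ha], b as [b hb]. simpl. intro h.
  assert (a = b) as <- by (apply functional_extensionality_dep; exact h).
  f_equal. apply proof_irrelevance.
Qed.

Lemma limit_map_root (a : limit_set) u (hu : compatible_maps phi u) :
  (forall i, U i (proj1_sig a i) (u i)) -> limit_root a (limit_map hu).
Proof. intros h. exists u. repeat split; auto. Qed.

Lemma limit_sim_at {a b i} : sim i (proj1_sig a i) (proj1_sig b i) -> limit_sim a b.
Proof. intros hi k. exact (sim_propagates (proj2_sig a) (proj2_sig b) hi). Qed.

Lemma limit_not_sim {a b} : ~ limit_sim a b -> forall i, ~ sim i (proj1_sig a i) (proj1_sig b i).
Proof. intros h i hi. exact (h (limit_sim_at hi)). Qed.

Lemma limit_equivalence : equivalence limit_sim.
Proof.
  split; [|split].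
  - intros x i. apply (lms_refl (level_LMS i)).
  - intros x y h i. apply (lms_sym (level_LMS i)), h.
  - intros x y z h1 h2 i. exact (lms_trans (level_LMS i) (h1 i) (h2 i)).
Qed.

Lemma limit_more_classes : more_than_two_classes limit_sim.
Proof.
  destruct three_separated_families as (a & b & c & ha & hb & hc & hab & hac & hbc).
  destruct index_inhabited as [i _].
  exists (exist _ a ha), (exist _ b hb), (exist _ c hc).
  repeat split; intro h; [apply (hab i)|apply (hac i)|apply (hbc i)]; apply h.
Qed.

Lemma limit_subgroup x : subgroup_Sym limit_sim (limit_root x).
Proof.
  split; [|split; [|split]].
  - exists (fun i z => z). repeat split; intros; try reflexivity.
    apply (root_id (level_LMS i)).
  - intros g h (u & hu & hcu & hgu) (v & hv & hcv & hhv).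
    exists (fun i z => v i (u i z)). repeat split.
    + intro i. exact (root_comp (level_LMS i) (hu i) (hv i)).
    + exact (compatible_maps_comp hcu hcv).
    + intros b i. rewrite hhv, hgu. reflexivity.
  - intros g (u & hu & hcu & hgu).
    destruct (dependent_choice (fun i h => U i (proj1_sig x i) h /\
                                  forall z, h (u i z) = z /\ u i (h z) = z)) as [h hh].
    { intro i. exact (root_inv (level_LMS i) (hu i)). }
    assert (hch : compatible_maps phi h) by (apply (compatible_maps_inverse hcu); apply hh).
    exists (limit_map hch). split.
    + apply limit_map_root. apply hh.
    + intro z. split; apply limit_ext; intro i; simpl; rewrite ?hgu; apply hh.
  - intros g (u & hu & _ & hgu) a b. split; intros hab i.
    + rewrite !hgu. exact (proj1 (root_preserves_sim (level_LMS i) (hu i) _ _) (hab i)).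
    + apply (root_preserves_sim (level_LMS i) (hu i)). rewrite <- !hgu. apply hab.
Qed.

Lemma limit_root_fixes {x u} : limit_root x u -> u x = x.
Proof.
  intros (v & hv & _ & huv). apply limit_ext. intro i.
  rewrite huv. exact (root_fixes (level_LMS i) (hv i)).
Qed.

Lemma limit_LM0 {x y} : limit_sim x y -> forall g, limit_root x g ->
  exists v, limit_root y v /\ forall z, limit_sim (g z) (v z).
Proof.
  intros hxy g (u & hu & _ & hgu).
  destruct (exists_not_sim limit_equivalence limit_more_classes x) as [z hz].
  assert (hxz := limit_not_sim hz).
  assert (hxt : forall i, ~ sim i (proj1_sig x i) (proj1_sig (g z) i)).
  { intro i. rewrite hgu. exact (root_image_not_sim (level_LMS i) (hu i) (hxz i)). }
  assert (hyz : forall i, ~ sim i (proj1_sig y i) (proj1_sig z i))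
    by (intros i h; exact (hxz i (lms_trans (level_LMS i) (hxy i) h))).
  assert (hyt : forall i, ~ sim i (proj1_sig y i) (proj1_sig (g z) i))
    by (intros i h; exact (hxt i (lms_trans (level_LMS i) (hxy i) h))).
  destruct (root_family (proj2_sig y) (proj2_sig z) (proj2_sig (g z)) hyz hyt)
    as (r & hcr & hr & hrz).
  exists (limit_map hcr). split; [apply limit_map_root, hr|].
  intros w i. simpl. rewrite hgu.
  destruct (lms_LM0 (level_LMS i) (hxy i) (hu i)) as (v & hv & huv).
  apply (lms_trans (level_LMS i) (huv _)).
  apply (root_unique_classes (level_LMS i) (hyz i) hv (hr i)).
  rewrite hrz, hgu. apply (lms_sym (level_LMS i)), huv.
Qed.

Lemma limit_root_transitive x y z : ~ limit_sim x y -> ~ limit_sim x z ->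
  exists u, limit_root x u /\ u y = z /\
    forall u', limit_root x u' -> u' y = z -> forall w, u' w = u w.
Proof.
  intros hy hz. assert (hxy := limit_not_sim hy). assert (hxz := limit_not_sim hz).
  destruct (root_family (proj2_sig x) (proj2_sig y) (proj2_sig z) hxy hxz)
    as (r & hcr & hr & hry).
  exists (limit_map hcr). split; [apply limit_map_root, hr|split].
  - apply limit_ext. apply hry.
  - intros u' (v & hv & _ & hu'v) e w. apply limit_ext. intro i. rewrite hu'v. simpl.
    apply (root_unique (level_LMS i) (hxy i) (hv i) (hr i)).
    rewrite hry, <- hu'v, e. reflexivity.
Qed.

Lemma limit_root_transitive_classes x y z : ~ limit_sim x y -> ~ limit_sim x z ->
  exists u, limit_root x u /\ limit_sim (u y) z /\
    forall u', limit_root x u' -> limit_sim (u' y) z -> forall w, limit_sim (u' w) (u w).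
Proof.
  intros hy hz. assert (hxy := limit_not_sim hy). assert (hxz := limit_not_sim hz).
  destruct (root_family (proj2_sig x) (proj2_sig y) (proj2_sig z) hxy hxz)
    as (r & hcr & hr & hry).
  exists (limit_map hcr). split; [apply limit_map_root, hr|split].
  - intro i. simpl. rewrite hry. apply (lms_refl (level_LMS i)).
  - intros u' (v & hv & _ & hu'v) e w i. rewrite hu'v. simpl.
    apply (root_unique_classes (level_LMS i) (hxy i) (hv i) (hr i)).
    rewrite hry, <- hu'v. apply e.
Qed.

Lemma limit_gen_group {g} : gen_group limit_root g ->
  exists gf, (forall i, gen_group (U i) (gf i)) /\ compatible_maps phi gf /\
    forall b i, proj1_sig (g b) i = gf i (proj1_sig b i).
Proof.
  induction 1 as [|y u g (uf & hu & hcu & hguf) _ (gf & hg & hcg & hggf)].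
  - exists (fun i z => z). repeat split; intros; try reflexivity. constructor.
  - exists (fun i z => gf i (uf i z)). repeat split.
    + intro i. econstructor; eauto.
    + exact (compatible_maps_comp hcu hcg).
    + intros b i. rewrite hggf, hguf. reflexivity.
Qed.

Lemma limit_root_conj x g ginv : gen_group limit_root g ->
  (forall z, ginv (g z) = z /\ g (ginv z) = z) ->
  forall u, limit_root (g x) u <-> exists v, limit_root x v /\ forall z, u z = g (v (ginv z)).
Proof.
  intros hg hginv u.
  destruct (limit_gen_group hg) as (gf & hgen & hcg & hggf).
  destruct (dependent_choice (fun i h => forall z, h (gf i z) = z /\ gf i (h z) = z))
    as [hf hhf].
  { intro i. exact (gen_group_invertible (level_LMS i) (hgen i)). }
  assert (hchf : compatible_maps phi hf) by exact (compatible_maps_inverse hcg hhf).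
  assert (hginvf : forall b i, proj1_sig (ginv b) i = hf i (proj1_sig b i)).
  { intros b i. rewrite <- (proj1 (hhf i (proj1_sig (ginv b) i))), <- hggf.
    rewrite (proj2 (hginv b)). reflexivity. }
  split.
  - intros (uf & hu & hcu & huf).
    pose (vf := fun i z => hf i (uf i (gf i z))).
    assert (hcv : compatible_maps phi vf)
      by exact (compatible_maps_comp (compatible_maps_comp hcg hcu) hchf).
    exists (limit_map hcv). split.
    + apply limit_map_root. intro i.
      specialize (hu i). rewrite hggf in hu.
      destruct (proj1 (root_conj (level_LMS i) (hgen i) (hhf i) _) hu) as (v & hv & huv).
      replace (vf i) with v; [exact hv|].
      apply functional_extensionality. intro w. unfold vf.
      rewrite huv, (proj1 (hhf i w)), (proj1 (hhf i _)). reflexivity.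
    + intro z. apply limit_ext. intro i. rewrite hggf. simpl. rewrite hginvf. unfold vf.
      rewrite (proj2 (hhf i _)), (proj2 (hhf i _)). apply huf.
  - intros (v & (vf & hv & hcv & hvf) & huv).
    exists (fun i z => gf i (vf i (hf i z))). repeat split.
    + intro i. rewrite hggf.
      apply (root_conj (level_LMS i) (hgen i) (hhf i)). exists (vf i). auto.
    + exact (compatible_maps_comp (compatible_maps_comp hchf hcv) hcg).
    + intros b i. rewrite huv, hggf, hvf, hginvf. reflexivity.
Qed.

Lemma limit_is_LMS : is_LMS limit_sim limit_root.
Proof.
  assert (hsym := proj1 (proj2 limit_equivalence)).
  split; [exact limit_equivalence|]. split; [exact limit_more_classes|].
  split; [exact limit_subgroup|]. split; [|split; [exact (fun x u => limit_root_fixes)|]].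
  - intros x y hxy. split; [exact (limit_LM0 hxy)|].
    intros v hv. destruct (limit_LM0 (hsym _ _ hxy) hv) as (u & hu & huv).
    exists u. split; [exact hu|]. intro z. apply hsym, huv.
  - split; [exact limit_root_transitive|]. split; [|split].
    + intros x u hu. rewrite (limit_root_fixes hu). apply (proj1 limit_equivalence).
    + exact limit_root_transitive_classes.
    + exact limit_root_conj.
Qed.

Lemma limit_cone : is_cone le X sim U phi limit_sim limit_root limit_proj.
Proof.
  split; [exact limit_is_LMS|split].
  - intro i. split.
    + intros a b. split; [intro h; apply h|apply limit_sim_at].
    + intros x u (uf & hu & _ & huf). exists (uf i). split; [apply hu|]. intro z. apply huf.
  - intros i j H z. apply (proj2_sig z).
Qed.

Lemma limit_universal (Z : Type) (simZ : Z -> Z -> Prop) (W : Z -> (Z -> Z) -> Prop)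
  (psi : forall i, Z -> X i) :
  is_cone le X sim U phi simZ W psi ->
  exists theta : Z -> limit_set,
    is_LMS_hom simZ W limit_sim limit_root theta /\
    (forall i z, limit_proj i (theta z) = psi i z) /\
    (forall theta' : Z -> limit_set, is_LMS_hom simZ W limit_sim limit_root theta' ->
       (forall i z, limit_proj i (theta' z) = psi i z) -> forall z, theta' z = theta z).
Proof.
  intros (hZ & hpsi & hcomm).
  assert (hthread : forall z, compatible phi (fun i => psi i z)) by (intros z i j H; apply hcomm).
  exists (fun z => exist _ _ (hthread z)). split; [split|split].
  - intros z z'. split; [intros h i; apply (hpsi i), h|].
    intros h. destruct index_inhabited as [i _]. apply (hpsi i), h.
  - intros z w hw.
    destruct (lms_exists_not_sim hZ z) as [z0 hz0].
    assert (hzw := root_image_not_sim hZ hw hz0).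
    assert (n0 : forall i, ~ sim i (psi i z) (psi i z0)) by (intros i h; apply hz0, (hpsi i), h).
    assert (n1 : forall i, ~ sim i (psi i z) (psi i (w z0))) by (intros i h; apply hzw, (hpsi i), h).
    destruct (root_family (hthread z) (hthread z0) (hthread (w z0)) n0 n1) as (r & hcr & hr & hrz).
    exists (limit_map hcr). split; [apply limit_map_root, hr|].
    intro z'. apply limit_ext. intro i. simpl.
    destruct (proj2 (hpsi i) z w hw) as (v & hv & hvw).
    rewrite hvw. apply (root_unique (level_LMS i) (n0 i) hv (hr i)).
    rewrite hrz, hvw. reflexivity.
  - reflexivity.
  - intros theta' _ h z. apply limit_ext. intro i. apply h.
Qed.

Lemma inverse_limit_exists_of_surjective : inverse_limit_exists le X sim U phi.
Proof.
  exists limit_set, limit_sim, limit_root, limit_proj.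
  split; [exact limit_cone|exact limit_universal].
Qed.

End InverseLimit.

Theorem mainTheorem13 (I : Type) (le : I -> I -> Prop) (X : I -> Type)
  (sim : forall i, X i -> X i -> Prop) (U : forall i, X i -> (X i -> X i) -> Prop)
  (phi : forall i j, le j i -> X i -> X j)
  (hdir : directed_set le)
  (hsys : inverse_system le X sim U phi)
  (hsurj : forall i j (H : le j i) (y : X j), exists x : X i, phi i j H x = y)
  (hcof : has_cofinal_sequence le) :
  let L := fun x : (forall i, X i) => forall i j (H : le j i), phi i j H (x i) = x j in
  (forall j (y : X j), exists x, L x /\ x j = y) /\
  (forall x y, L x -> L y ->
     ((exists i, sim i (x i) (y i)) <-> (forall i, sim i (x i) (y i)))) /\
  (exists a b c, L a /\ L b /\ L c /\
     ~ (exists i, sim i (a i) (b i)) /\ ~ (exists i, sim i (a i) (c i)) /\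
     ~ (exists i, sim i (b i) (c i))) /\
  inverse_limit_exists le X sim U phi.
Proof.
  intros L. split; [|split; [|split]].
  - exact (projection_surjective hdir hsys hsurj hcof).
  - intros x y hx hy. split.
    + intros [i hi] k. exact (sim_propagates hdir hsys hx hy hi).
    + intros h. destruct (index_inhabited hdir) as [i _]. exists i. apply h.
  - destruct (three_separated_families hdir hsys hsurj hcof)
      as (a & b & c & ha & hb & hc & hab & hac & hbc).
    exists a, b, c. repeat split; try assumption; intros [i hi];
      [exact (hab i hi)|exact (hac i hi)|exact (hbc i hi)].
  - exact (inverse_limit_exists_of_surjective hdir hsys hsurj hcof).
Qed.
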